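(* Let $m\ge0$, $r>0$, $\gamma>0$ and $0<\alpha<\pi/2$. If $$r\le\sqrt{\frac{\pi(\pi-2\alpha)}{4\alpha^2 m\gamma}},$$ then for all $0\le\tau<\alpha mr$, all $d\ge0$ and all $\omega>0$, $$\mathrm{Re}\left(\Big(\pi+\frac{2j(\pi-\alpha)}{\alpha}\Big)\left(1+\frac{\gamma}{j\omega\big(mj\omega+d+\tfrac1re^{-j\omega\tau}\big)}\right)\right)>0.$$
   Context: $j$ denotes the imaginary unit. *)

From Stdlib Require Export Reals Lra.
Open Scope R_scope.

Definition Cplx := (R * R)%type.
Definition Re (z : Cplx) : R := fst z.
Definition Im (z : Cplx) : R := snd z.
Definition RtoC (x : R) : Cplx := (x, 0).
Definition Cj : Cplx := (0, 1).
Definition Cadd (z w : Cplx) : Cplx := (Re z + Re w, Im z + Im w).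
Definition Cmul (z w : Cplx) : Cplx :=
  (Re z * Re w - Im z * Im w, Re z * Im w + Im z * Re w).
Definition Cinv (z : Cplx) : Cplx :=
  (Re z / (Re z ^ 2 + Im z ^ 2), - Im z / (Re z ^ 2 + Im z ^ 2)).
Definition Cdiv (z w : Cplx) : Cplx := Cmul z (Cinv w).
Definition Cexpj (t : R) : Cplx := (cos t, sin t).

From Stdlib Require Import Reals Lra Psatz.
Open Scope R_scope.

(* Writing the loop denominator as D = a + j b, the real part is positive iff
   PI |D|^2 + gamma (PI a + K b) > 0.  In the normalized variables x = m omega r,
   dl = d r, s = omega tau this is, up to a positive factor, the [margin] below with
   G = gamma m r^2 and K = 4 x0 - 2, where x0 = PI / (2 alpha); the hypotheses become
   G <= x0 (x0 - 1) and 2 x0 s < PI x.  The margin is affine in G and nonnegative at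
   G = 0, so only the critical gain G = x0 (x0 - 1) matters.  If s >= PI/2 the delay
   bound forces x > x0 and the terms in sin s dominate.  Otherwise cos s > 0, the
   damping dl can be dropped, and for x < x0 the delay bound gives
   s < PI/2 - PI (x0 - x) / (2 x0), so cos s exceeds the cubic Taylor minorant of
   sin (PI (x0 - x) / (2 x0)); positivity then reduces to a polynomial inequality
   in x0 and x. *)

Lemma PI_lt_16_5 : PI < 16/5.
Proof.
  apply Rnot_le_lt; intro Hge.
  assert (cos_nonneg : 0 <= cos (8/5)) by (apply cos_ge_0; lra).
  assert (cos_le_ub : cos (8/5) <= cos_ub (8/5)) by (apply COS; lra).
  enough (cos_ub (8/5) < 0) by lra.
  unfold cos_ub, cos_approx, cos_term; cbn [sum_f_R0].
  rewrite !INR_IZR_INZ.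
  change (Z.of_nat (Factorial.fact (2*0))) with 1%Z.
  change (Z.of_nat (Factorial.fact (2*1))) with 2%Z.
  change (Z.of_nat (Factorial.fact (2*2))) with 24%Z.
  change (Z.of_nat (Factorial.fact (2*3))) with 720%Z.
  change (Z.of_nat (Factorial.fact (2*4))) with 40320%Z.
  cbn [Nat.mul Nat.add]. lra.
Qed.

Lemma sin_ge_cubic (e : R) : 0 <= e <= 2 -> e - e^3/6 <= sin e.
Proof.
  intros He.
  assert (Hlb : sin_lb e <= sin e) by (apply SIN; pose proof PI2_3_2; lra).
  enough (e - e^3/6 <= sin_lb e) by lra.
  unfold sin_lb, sin_approx, sin_term; cbn [sum_f_R0].
  rewrite !INR_IZR_INZ.
  change (Z.of_nat (Factorial.fact (2*0+1))) with 1%Z.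
  change (Z.of_nat (Factorial.fact (2*1+1))) with 6%Z.
  change (Z.of_nat (Factorial.fact (2*2+1))) with 120%Z.
  change (Z.of_nat (Factorial.fact (2*3+1))) with 5040%Z.
  cbn [Nat.mul Nat.add pow].
  assert (0 <= e^5) by (apply pow_le; lra).
  assert (e^2 <= 4) by nra.
  nra.
Qed.

Definition margin (G K x dl sn c : R) : R :=
  PI*x*((sn - x)^2 + (c + dl)^2) + G*(PI*(sn - x) + K*(c + dl)).

Definition margin_minorant (x0 x sn c : R) : R :=
  PI*(x-1)*(x-x0)*(x+x0-1) + PI*(2*x^2 - x0*(x0-1))*(1-sn) + x0*(x0-1)*(4*x0-2)*c.

Lemma low_freq_poly_pos (x0 x : R) : 1 < x0 -> 0 <= x < x0 -> 2*x^2 <= x0*(x0-1) ->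
  0 < (x0-x)^2*(9*(x0-1) + 8*x) + 16*x^2 - 8*x0*(x0-1).
Proof.
  intros Hx0 Hx Hsq.
  set (v := x0 - 1).
  replace x0 with (v + 1) in * by (unfold v; ring).
  assert (Hv : 0 < v) by lra.
  assert (0 <= x*((1+v)*v - 2*x^2)) by nra.
  assert (0 <= v*((1+v)*v - 2*x^2)) by nra.
  assert (0 <= x*v) by nra.
  assert (0 <= x*v*v) by nra.
  assert (0 <= x*x*v) by nra.
  nra.
Qed.

Section CriticalGain.

Variable x0 : R.
Hypothesis x0_gt_1 : 1 < x0.

Lemma margin_pos_large_delay (x e dl sn c : R) :
  x0 < x -> 0 <= e -> 2*x0*e < PI*(x - x0) -> 0 <= dl -> sn <= 1 -> -e <= c ->
  0 < margin (x0*(x0-1)) (4*x0-2) x dl sn c.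
Proof.
  intros Hx He Hdelay Hdl Hsn Hc; unfold margin.
  pose proof PI_RGT_0 as HPI.
  set (G0 := x0*(x0-1)).
  assert (HG0 : 0 < G0) by (unfold G0; nra).
  assert (Hsin_part : PI*x*(sn-x)^2 + G0*(PI*(sn-x)) >= PI*(x-1)*(x-x0)*(x+x0-1)).
  { assert (0 <= x*(2*x - sn - 1) - G0) by (unfold G0; nra).
    assert (0 <= (1-sn)*(x*(2*x - sn - 1) - G0)) by nra.
    replace (PI*(x-1)*(x-x0)*(x+x0-1))
      with (PI*x*(sn-x)^2 + G0*(PI*(sn-x)) - PI*((1-sn)*(x*(2*x - sn - 1) - G0)))
      by (unfold G0; ring).
    nra. }
  assert (Hcos_part : PI*x*(c+dl)^2 + G0*((4*x0-2)*(c+dl)) >= - G0*(4*x0-2)*e).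
  { assert (0 <= PI*x*(c+dl)^2) by (apply Rmult_le_pos; [nra|apply pow2_ge_0]).
    assert (0 <= G0*(4*x0-2)*(c+dl+e)) by (apply Rmult_le_pos; nra).
    nra. }
  assert (Hdominant : G0*(4*x0-2)*e < PI*(x-1)*(x-x0)*(x+x0-1)).
  { replace (G0*(4*x0-2)*e) with (2*x0*e*((x0-1)*(2*x0-1))) by (unfold G0; ring).
    assert (0 < (x0-1)*(2*x0-1)) by nra.
    assert ((x0-1)*(2*x0-1) <= (x-1)*(x+x0-1)) by nra.
    assert (PI*(x-x0)*((x0-1)*(2*x0-1)) <= PI*(x-x0)*((x-1)*(x+x0-1)))
      by (apply Rmult_le_compat_l; nra).
    nra. }
  nra.
Qed.

Lemma margin_ge_minorant (x dl sn c : R) :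
  0 < x -> 0 <= dl -> 0 < c -> sn^2 + c^2 = 1 ->
  margin_minorant x0 x sn c <= margin (x0*(x0-1)) (4*x0-2) x dl sn c.
Proof.
  intros Hx Hdl Hc Hpyth; unfold margin, margin_minorant.
  pose proof PI_RGT_0 as HPI.
  assert (0 < x0*(x0-1)*(4*x0-2)) by (assert (0 < x0*(x0-1)) by nra; nra).
  assert (0 <= dl*(PI*x*(2*c+dl) + x0*(x0-1)*(4*x0-2)))
    by (apply Rmult_le_pos; [lra | assert (0 < PI*x) by nra; nra]).
  assert (E : PI*x*((sn - x)^2 + (c + dl)^2) + x0*(x0-1)*(PI*(sn - x) + (4*x0-2)*(c + dl))
     - (PI*(x-1)*(x-x0)*(x+x0-1) + PI*(2*x^2 - x0*(x0-1))*(1-sn) + x0*(x0-1)*(4*x0-2)*c)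
     = PI*x*(sn^2 + c^2 - 1) + dl*(PI*x*(2*c+dl) + x0*(x0-1)*(4*x0-2))) by ring.
  rewrite Hpyth in E. lra.
Qed.

Lemma minorant_pos_high_freq (x sn c : R) :
  x0 <= x -> 0 < c -> sn <= 1 -> 0 < margin_minorant x0 x sn c.
Proof.
  intros Hx Hc Hsn; unfold margin_minorant.
  pose proof PI_RGT_0 as HPI.
  assert (0 <= PI*(x-1)*(x-x0)*(x+x0-1))
    by (assert (0 <= (x-1)*(x-x0)) by nra; assert (0 <= PI*((x-1)*(x-x0))) by nra; nra).
  assert (0 <= PI*(2*x^2 - x0*(x0-1))*(1-sn))
    by (assert (0 <= 2*x^2 - x0*(x0-1)) by nra; apply Rmult_le_pos; nra).
  assert (0 < x0*(x0-1)*(4*x0-2)*c)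
    by (assert (0 < x0*(x0-1)) by nra; assert (0 < x0*(x0-1)*(4*x0-2)) by nra; nra).
  lra.
Qed.

Lemma minorant_pos_low_freq (x e sn c : R) :
  0 < x < x0 -> 2*x0*e = PI*(x0 - x) -> e - e^3/6 <= c -> 0 <= sn <= 1 ->
  0 < margin_minorant x0 x sn c.
Proof.
  intros Hx He Hc Hsn; unfold margin_minorant.
  pose proof PI_RGT_0 as HPI.
  pose proof PI_lt_16_5 as HPI_ub.
  set (z := x0 - x).
  assert (Hz : 0 < z < x0) by (unfold z; lra).
  assert (Ex : x = x0 - z) by (unfold z; ring).
  clearbody z; subst x.
  assert (He0 : 0 < e) by nra.
  assert (He2 : (2*x0-1)*e^2 <= 21/4*z).
  { assert (E : 4*x0^2*e^2 = PI^2*z^2)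
      by (replace (4*x0^2*e^2) with ((2*x0*e)^2) by ring; rewrite He; ring).
    assert (PI^2 <= 256/25) by nra.
    assert (z^2 <= x0*z) by nra.
    assert (PI^2*z^2 <= 256/25*(x0*z)) by (apply Rmult_le_compat; nra).
    nra. }
  assert (Hcos : PI*(x0-1)*z*((2*x0-1) - 7/8*z) <= x0*(x0-1)*(4*x0-2)*c).
  { assert (Hk : 0 < x0*(x0-1)*(4*x0-2)) by (assert (0 < x0*(x0-1)) by nra; nra).
    assert (x0*(x0-1)*(4*x0-2)*(e - e^3/6) <= x0*(x0-1)*(4*x0-2)*c)
      by (apply Rmult_le_compat_l; lra).
    assert (E : x0*(x0-1)*(4*x0-2)*(e - e^3/6)
                = PI*(x0-1)*z*((2*x0-1) - (2*x0-1)*e^2/6))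
      by (replace (PI*(x0-1)*z) with ((x0-1)*(2*x0*e)) by (rewrite He; ring); field).
    assert (PI*(x0-1)*z*((2*x0-1)*e^2/6) <= PI*(x0-1)*z*(7/8*z))
      by (apply Rmult_le_compat_l; [assert (0 < PI*(x0-1)) by nra; nra | lra]).
    lra. }
  enough (0 < z^2*(9*(x0-1) + 8*(x0-z)) + 8*(2*(x0-z)^2 - x0*(x0-1))*(1-sn)) by nra.
  assert (0 < z^2*(9*(x0-1) + 8*(x0-z))) by (apply Rmult_lt_0_compat; nra).
  destruct (Rle_lt_dec (x0*(x0-1)) (2*(x0-z)^2)) as [Hbig|Hsmall].
  - assert (0 <= (2*(x0-z)^2 - x0*(x0-1))*(1-sn)) by (apply Rmult_le_pos; lra).
    nra.
  - pose proof (low_freq_poly_pos x0 (x0 - z) x0_gt_1 ltac:(lra) ltac:(lra)) as Hpoly.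
    replace (x0 - (x0 - z)) with z in Hpoly by ring.
    assert (8*(2*(x0-z)^2 - x0*(x0-1)) <= 8*(2*(x0-z)^2 - x0*(x0-1))*(1-sn)) by nra.
    lra.
Qed.

Lemma margin_pos_critical (x s dl : R) :
  0 < x -> 0 <= s -> 2*x0*s < PI*x -> 0 <= dl ->
  0 < margin (x0*(x0-1)) (4*x0-2) x dl (sin s) (cos s).
Proof.
  intros Hx Hs Hdelay Hdl.
  pose proof PI_RGT_0 as HPI.
  assert (Hpyth : sin s ^ 2 + cos s ^ 2 = 1)
    by (pose proof (sin2_cos2 s) as E; unfold Rsqr in E; lra).
  assert (Hsin1 : sin s <= 1) by (pose proof (SIN_bound s); lra).
  destruct (Rle_lt_dec (PI/2) s) as [Hlarge|Hsmall].
  - set (e := s - PI/2).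
    assert (Hcos : cos s = - sin e).
    { replace s with (PI/2 - - e) by (unfold e; ring). now rewrite cos_shift, sin_neg. }
    assert (Hsin_e : sin e <= e).
    { destruct (Req_dec e 0) as [E|E].
      - rewrite E, sin_0; lra.
      - left; apply sin_lt_x; unfold e in *; lra. }
    apply (margin_pos_large_delay x e); unfold e in *; nra.
  - assert (Hcos : 0 < cos s) by (apply cos_gt_0; lra).
    apply (Rlt_le_trans _ (margin_minorant x0 x (sin s) (cos s)));
      [| now apply margin_ge_minorant].
    destruct (Rle_lt_dec x0 x) as [Hhigh|Hlow].
    + now apply minorant_pos_high_freq.
    + set (e := PI*(x0-x)/(2*x0)).
      assert (He : 2*x0*e = PI*(x0-x)) by (unfold e; field; lra).
      assert (He0 : 0 < e) by (unfold e; apply Rdiv_lt_0_compat; nra).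
      assert (Hs_e : s < PI/2 - e) by nra.
      assert (Hcos_e : sin e < cos s)
        by (rewrite <- cos_shift; apply cos_decreasing_1; lra).
      assert (Hsin_cubic : e - e^3/6 <= sin e) by (apply sin_ge_cubic; pose proof PI_4; lra).
      apply (minorant_pos_low_freq x e); try lra.
      split; [apply sin_ge_0|]; lra.
Qed.

Lemma margin_pos (G x s dl : R) :
  0 < G <= x0*(x0-1) -> 0 < x -> 0 <= s -> 2*x0*s < PI*x -> 0 <= dl ->
  0 < margin G (4*x0-2) x dl (sin s) (cos s).
Proof.
  intros HG Hx Hs Hdelay Hdl.
  pose proof (margin_pos_critical x s dl Hx Hs Hdelay Hdl) as Hcrit.
  assert (Hzero : 0 <= margin 0 (4*x0-2) x dl (sin s) (cos s)).
  { unfold margin. pose proof PI_RGT_0.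
    assert (0 <= (sin s - x)^2 + (cos s + dl)^2)
      by (apply Rplus_le_le_0_compat; apply pow2_ge_0).
    assert (0 <= PI*x) by nra. nra. }
  assert (Haffine : x0*(x0-1) * margin G (4*x0-2) x dl (sin s) (cos s)
      = (x0*(x0-1) - G) * margin 0 (4*x0-2) x dl (sin s) (cos s)
        + G * margin (x0*(x0-1)) (4*x0-2) x dl (sin s) (cos s))
    by (unfold margin; ring).
  nra.
Qed.

End CriticalGain.

Lemma Re_lead_factor (P K g : R) (D : Cplx) :
  Re (Cmul (Cadd (RtoC P) (Cmul (RtoC K) Cj)) (Cadd (RtoC 1) (Cdiv (RtoC g) D)))
  = P + g*(P*Re D + K*Im D) / (Re D^2 + Im D^2).
Proof.
  destruct D as [a b]; cbv [Re Im Cmul Cadd Cdiv Cinv RtoC Cj fst snd].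
  unfold Rdiv; ring.
Qed.

Lemma Re_lead_factor_pos (P K g : R) (D : Cplx) :
  0 < P -> 0 < P*(Re D^2 + Im D^2) + g*(P*Re D + K*Im D) ->
  0 < Re (Cmul (Cadd (RtoC P) (Cmul (RtoC K) Cj)) (Cadd (RtoC 1) (Cdiv (RtoC g) D))).
Proof.
  rewrite Re_lead_factor.
  intros HP Hnum.
  assert (Hnorm : 0 < Re D^2 + Im D^2).
  { destruct (Rle_lt_dec (Re D^2 + Im D^2) 0) as [Hle|Hlt]; [exfalso|exact Hlt].
    assert (Hre : Re D = 0) by nra. assert (Him : Im D = 0) by nra.
    rewrite Hre, Him in Hnum. lra. }
  replace (P + g*(P*Re D + K*Im D) / (Re D^2 + Im D^2))
    with ((P*(Re D^2 + Im D^2) + g*(P*Re D + K*Im D)) / (Re D^2 + Im D^2)) by (field; lra).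
  now apply Rdiv_lt_0_compat.
Qed.

Lemma loop_denominator_parts (m d r omega tau : R) :
  let D := Cmul (Cmul Cj (RtoC omega))
             (Cadd (Cadd (Cmul (RtoC m) (Cmul Cj (RtoC omega))) (RtoC d))
                   (Cmul (RtoC (1 / r)) (Cexpj (- (omega * tau))))) in
  Re D = omega*((1/r)*sin (omega*tau) - m*omega) /\ Im D = omega*(d + (1/r)*cos (omega*tau)).
Proof.
  cbv [Re Im Cmul Cadd RtoC Cj Cexpj fst snd].
  rewrite cos_neg, sin_neg; split; ring.
Qed.

Lemma loop_numerator_scaling (K gamma m r d omega sn c : R) : m <> 0 -> r <> 0 ->
  PI*((omega*((1/r)*sn - m*omega))^2 + (omega*(d + (1/r)*c))^2)
    + gamma*(PI*(omega*((1/r)*sn - m*omega)) + K*(omega*(d + (1/r)*c)))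
  = omega/(m*r^3) * margin (gamma*m*r^2) K (m*omega*r) (d*r) sn c.
Proof. intros; unfold margin; field; auto. Qed.

Lemma gain_bound_of_sqrt (m r gamma alpha : R) :
  0 <= m -> 0 < r -> 0 < gamma -> 0 < alpha < PI / 2 ->
  r <= sqrt (PI * (PI - 2 * alpha) / (4 * alpha ^ 2 * m * gamma)) ->
  0 < m /\ gamma*m*r^2 <= PI/(2*alpha) * (PI/(2*alpha) - 1).
Proof.
  intros Hm Hr Hg Halpha Hsqrt.
  assert (Hm_pos : 0 < m).
  { destruct Hm as [Hm | <-]; [exact Hm|].
    rewrite Rmult_0_r, Rmult_0_l, Rdiv_0_r, sqrt_0 in Hsqrt; lra. }
  split; [exact Hm_pos|].
  set (Y := PI * (PI - 2 * alpha) / (4 * alpha ^ 2 * m * gamma)) in Hsqrt.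
  assert (HY : 0 < Y).
  { pose proof PI_RGT_0. unfold Y.
    apply Rdiv_lt_0_compat; [nra|].
    repeat apply Rmult_lt_0_compat; try apply pow_lt; lra. }
  assert (Hr2 : r^2 <= Y).
  { rewrite <- (sqrt_sqrt Y) by lra.
    replace (r^2) with (r*r) by ring.
    apply Rmult_le_compat; lra. }
  replace (PI/(2*alpha) * (PI/(2*alpha) - 1)) with (gamma*m*Y) by (unfold Y; field; lra).
  apply Rmult_le_compat_l; [nra | exact Hr2].
Qed.

Theorem mainTheorem12 (m r gamma alpha : R) :
  0 <= m -> 0 < r -> 0 < gamma -> 0 < alpha < PI / 2 ->
  r <= sqrt (PI * (PI - 2 * alpha) / (4 * alpha ^ 2 * m * gamma)) ->
  forall tau d omega : R,
    0 <= tau < alpha * m * r -> 0 <= d -> 0 < omega ->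
    let jw := Cmul Cj (RtoC omega) in
    0 < Re (Cmul
              (Cadd (RtoC PI) (Cmul (RtoC (2 * (PI - alpha) / alpha)) Cj))
              (Cadd (RtoC 1)
                 (Cdiv (RtoC gamma)
                    (Cmul jw
                       (Cadd (Cadd (Cmul (RtoC m) jw) (RtoC d))
                             (Cmul (RtoC (1 / r)) (Cexpj (- (omega * tau))))))))).
Proof.
  intros Hm Hr Hgamma Halpha Hsqrt tau d omega [Htau0 Htau] Hd Homega jw; subst jw.
  destruct (gain_bound_of_sqrt m r gamma alpha) as [Hm_pos Hgain]; try assumption.
  pose proof PI_RGT_0 as HPI.
  set (x0 := PI/(2*alpha)) in Hgain.
  apply Re_lead_factor_pos; [exact HPI|].
  destruct (loop_denominator_parts m d r omega tau) as [-> ->].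
  rewrite loop_numerator_scaling by lra.
  replace (2 * (PI - alpha) / alpha) with (4*x0 - 2) by (unfold x0; field; lra).
  apply Rmult_lt_0_compat.
  - apply Rdiv_lt_0_compat; [lra|]. apply Rmult_lt_0_compat; [lra | now apply pow_lt].
  - apply margin_pos; try nra.
    + unfold x0; apply (Rmult_lt_reg_r (2*alpha)); [lra|]; field_simplify; lra.
    + split; [repeat apply Rmult_lt_0_compat; try apply pow_lt; lra | exact Hgain].
    + unfold x0.
      replace (2 * (PI / (2 * alpha)) * (omega * tau)) with (PI * omega * (tau / alpha))
        by (field; lra).
      replace (PI * (m * omega * r)) with (PI * omega * (alpha * m * r / alpha)) by (field; lra).
      apply Rmult_lt_compat_l; [nra|].
      apply Rmult_lt_compat_r; [apply Rinv_0_lt_compat|]; lra.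
Qed.
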